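(* Let $(\mathcal T(n))_{n\in\mathbb N}$ be the triangle Markov chain obtained by iterated random barycentric subdivision started from an arbitrary triangle $\mathcal T(0)$, and let $(X_n,Y_n)$ be the characterizing point of $\mathcal T(n)$. There exists a constant $\chi>0$ (not depending on $\mathcal T(0)$) such that almost surely $$\limsup_{n\to\infty}\frac1n\ln(Y_n)\le-\chi .$$
   Context: A triangle is given by three points of the plane which are not all equal (degenerate triangles with collinear vertices are allowed). Barycentric subdivision: if a triangle has vertices $A,B,C$, let $D,E,F$ be the midpoints of $[A,B],[B,C],[C,A]$ and $G$ its barycenter; the medians cut it into the six triangles $\{A,D,G\},\{D,B,G\},\{B,E,G\},\{E,C,G\},\{C,F,G\},\{F,A,G\}$. The triangle Markov chain: $\mathcal T(0)$ is given and, for each $n$, $\mathcal T(n+1)$ is chosen uniformly at random among the six triangles of the barycentric subdivision of $\mathcal T(n)$, independently of all previous choices. Characterizing point: for any triangle there is a similitude of the plane mapping it onto a triangle with vertices $(0,0)$, $(1,0)$, $(x,y)$, with $0\le x\le 1/2$, $y\ge 0$, sending its longest edge onto $[(0,0),(1,0)]$ and its shortest edge onto $[(0,0),(x,y)]$; the point $(x,y)$ is uniquely determined and is called the characterizing point of the triangle. The triangle is flat iff $y=0$. Convention $\ln 0=-\infty$. *)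

From HB Require Import structures.
From mathcomp Require Import all_boot all_order all_algebra.
From mathcomp Require Import all_classical all_reals all_analysis.
Set Implicit Arguments. Unset Strict Implicit. Unset Printing Implicit Defensive.
Import Order.TTheory GRing.Theory Num.Theory.
Local Open Scope ring_scope.
Local Open Scope classical_set_scope.

Section Triangles.
Variable R : realType.

Definition point := (R * R)%type.
Definition triangle := (point * point * point)%type.

Definition vA (t : triangle) : point := t.1.1.
Definition vB (t : triangle) : point := t.1.2.
Definition vC (t : triangle) : point := t.2.

Definition not_all_equal (t : triangle) : Prop :=
  ~ (vA t = vB t /\ vB t = vC t).

Definition padd (p q : point) : point := (p.1 + q.1, p.2 + q.2).
Definition pscale (a : R) (p : point) : point := (a * p.1, a * p.2).
Definition midpoint (p q : point) : point := pscale (2^-1) (padd p q).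
Definition barycenter (t : triangle) : point :=
  pscale (3^-1) (padd (vA t) (padd (vB t) (vC t))).

Definition subdiv_child (k : 'I_6) (t : triangle) : triangle :=
  let A := vA t in let B := vB t in let C := vC t in
  let D := midpoint A B in let E := midpoint B C in let F := midpoint C A in
  let G := barycenter t in
  match val k with
  | 0 => (A, D, G)
  | 1 => (D, B, G)
  | 2 => (B, E, G)
  | 3 => (E, C, G)
  | 4 => (C, F, G)
  | _ => (F, A, G)
  end.

Fixpoint tri_chain (T : Type) (T0 : triangle) (c : nat -> T -> 'I_6)
   (w : T) (n : nat) : triangle :=
  match n with
  | 0 => T0
  | m.+1 => subdiv_child (c m w) (tri_chain T0 c w m)
  end.

Definition dist (p q : point) : R :=
  Num.sqrt ((p.1 - q.1) ^+ 2 + (p.2 - q.2) ^+ 2).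

Definition side_long (t : triangle) : R :=
  Num.max (dist (vA t) (vB t)) (Num.max (dist (vB t) (vC t)) (dist (vC t) (vA t))).
Definition side_short (t : triangle) : R :=
  Num.min (dist (vA t) (vB t)) (Num.min (dist (vB t) (vC t)) (dist (vC t) (vA t))).
Definition side_mid (t : triangle) : R :=
  dist (vA t) (vB t) + dist (vB t) (vC t) + dist (vC t) (vA t)
  - side_long t - side_short t.

(* characterizing point (x,y): image of the third vertex under the
   similitude sending the longest edge to [(0,0),(1,0)] and the shortest
   edge to [(0,0),(x,y)], y >= 0.  So |(x,y)| = s/l, |(x,y)-(1,0)| = m/l. *)
Definition char_x (t : triangle) : R :=
  (side_long t ^+ 2 + side_short t ^+ 2 - side_mid t ^+ 2)
    / (2 * side_long t ^+ 2).
Definition char_y (t : triangle) : R :=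
  Num.sqrt ((side_short t / side_long t) ^+ 2 - char_x t ^+ 2).
Definition char_point (t : triangle) : point := (char_x t, char_y t).

Definition lnE (y : R) : \bar R := if y == 0 then -oo%E else (ln y)%:E.

End Triangles.

Definition iid_uniform6 (d : measure_display) (T : measurableType d)
  (R : realType) (P : probability T R) (c : nat -> T -> 'I_6) : Prop :=
  (forall n (k : 'I_6), measurable [set w | c n w = k]) /\
  (forall (S : seq nat) (f : nat -> 'I_6), uniq S ->
     P [set w | forall i, i \in S -> c i w = f i]
       = ((6%:R : R)^-1 ^+ size S)%:E).

From Pilot Require Import Defs.
From HB Require Import structures.
From mathcomp Require Import all_boot all_order all_algebra.
From mathcomp Require Import all_classical all_reals all_analysis.
From mathcomp Require Import ring lra.
Import Order.TTheory GRing.Theory Num.Theory.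
Set Implicit Arguments. Unset Strict Implicit. Unset Printing Implicit Defensive.
Local Open Scope ring_scope.
Local Open Scope classical_set_scope.

(* Write p, q, r for the squared side lengths of a triangle t and sqsum t = p + q + r.
   Thirty-six times the sqsum of the k-th child of t is a linear form L_k(p, q, r), and
   every child has one sixth of the signed area of t.  A branch-and-bound certificate over
   the normalised triangles p = 1 >= q >= r >= 0 shows that
   sum_k sqrt (36 (p + q + r) / L_k(p, q, r)) <= 14.64 for every triangle: the inverse
   size s(t) = sqsum t ^ (-1/2) grows in mean by at most 14.64 / 6 < 2.445 per step.
   Markov's inequality and Borel-Cantelli then give s(T_n) <= 2.445 ^ n eventually, almost
   surely.  The ordinate of the characterizing point is |2 area| / (longest side)^2
   <= 3 |2 area| s(t)^2 and the area is divided by 6 at each step, so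
   Y_n <= C (2.445^2 / 6)^n eventually, with 2.445^2 < 6. *)

Section TriangleChain.
Variable R : realType.

(** * Geometry of one subdivision step *)

Definition sqdist (P Q : Defs.point R) : R := (P.1 - Q.1) ^+ 2 + (P.2 - Q.2) ^+ 2.

Definition sqAB (t : triangle R) := sqdist (vA t) (vB t).
Definition sqBC (t : triangle R) := sqdist (vB t) (vC t).
Definition sqCA (t : triangle R) := sqdist (vC t) (vA t).
Definition sqsum (t : triangle R) := sqAB t + sqBC t + sqCA t.

Definition area2 (t : triangle R) : R :=
  ((vB t).1 - (vA t).1) * ((vC t).2 - (vA t).2)
  - ((vB t).2 - (vA t).2) * ((vC t).1 - (vA t).1).

Definition heron (p q r : R) := 2 * p * q + 2 * q * r + 2 * r * p - p ^+ 2 - q ^+ 2 - r ^+ 2.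

Definition child_sqsum (k : nat) (p q r : R) : R :=
  match k with
  | 0 => 16 * p + 10 * r - 2 * q
  | 1 => 16 * p + 10 * q - 2 * r
  | 2 => 16 * q + 10 * p - 2 * r
  | 3 => 16 * q + 10 * r - 2 * p
  | 4 => 16 * r + 10 * q - 2 * p
  | _ => 16 * r + 10 * p - 2 * q
  end.

Lemma sqdist_ge0 P Q : 0 <= sqdist P Q.
Proof. by rewrite addr_ge0 ?sqr_ge0. Qed.

Lemma sqdist_eq0 P Q : sqdist P Q = 0 -> P = Q.
Proof.
case: P Q => [p1 p2] [q1 q2] /eqP; rewrite paddr_eq0 ?sqr_ge0 // !sqrf_eq0.
by rewrite !subr_eq0 => /andP[/eqP /= -> /eqP ->].
Qed.

Lemma sqdist_le P Q M : sqdist P Q <= 2 * (sqdist Q M + sqdist M P).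
Proof.
have := sqr_ge0 (P.1 + Q.1 - 2 * M.1); have := sqr_ge0 (P.2 + Q.2 - 2 * M.2).
rewrite /sqdist; nra.
Qed.

Lemma sqr_dist P Q : dist P Q ^+ 2 = sqdist P Q.
Proof. by rewrite sqr_sqrtr ?sqdist_ge0. Qed.

Lemma sqsum_gt0 t : not_all_equal t -> 0 < sqsum t.
Proof.
move=> t_nondeg; have := sqdist_ge0 (vA t) (vB t); have := sqdist_ge0 (vB t) (vC t).
have := sqdist_ge0 (vC t) (vA t); rewrite /sqsum /sqAB /sqBC /sqCA => ? ? ?.
rewrite lt_neqAle eq_sym; apply/andP; split; last by lra.
by apply/eqP => sum0; apply: t_nondeg; split; apply: sqdist_eq0; lra.
Qed.

Lemma sqsum_child k t :
  36 * sqsum (subdiv_child k t) = child_sqsum k (sqAB t) (sqBC t) (sqCA t).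
Proof.
case: t => [[[a1 a2] [b1 b2]] [c1 c2]].
by case: k => [[|[|[|[|[|[|//]]]]]] ?];
  rewrite /sqsum /sqAB /sqBC /sqCA /sqdist /= /midpoint /barycenter /pscale /padd /=;
  field.
Qed.

Lemma sqsum_child_gt0 k t : 0 < sqsum t -> 0 < sqsum (subdiv_child k t).
Proof.
move=> sqsum_gt0; rewrite -(pmulr_rgt0 _ (_ : 0 < 36)) // sqsum_child.
have := sqdist_le (vA t) (vB t) (vC t); have := sqdist_le (vB t) (vC t) (vA t).
have := sqdist_le (vC t) (vA t) (vB t); have := sqdist_ge0 (vA t) (vB t).
have := sqdist_ge0 (vB t) (vC t); have := sqdist_ge0 (vC t) (vA t).
rewrite -/(sqAB t) -/(sqBC t) -/(sqCA t); move: sqsum_gt0; rewrite /sqsum.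
by case: k => [[|[|[|[|[|[|//]]]]]] ?] /=; lra.
Qed.

Lemma area2_child k t : area2 (subdiv_child k t) = area2 t / 6.
Proof.
case: t => [[[a1 a2] [b1 b2]] [c1 c2]].
by case: k => [[|[|[|[|[|[|//]]]]]] ?];
  rewrite /area2 /= /midpoint /barycenter /pscale /padd /=; field.
Qed.

Lemma heron_sqdist t : heron (sqAB t) (sqBC t) (sqCA t) = 4 * area2 t ^+ 2.
Proof.
case: t => [[[a1 a2] [b1 b2]] [c1 c2]].
by rewrite /heron /sqAB /sqBC /sqCA /sqdist /area2 /=; ring.
Qed.

Lemma heron_sort (a b c : R) :
  let L := Num.max a (Num.max b c) in let S := Num.min a (Num.min b c) in
  heron (L ^+ 2) (S ^+ 2) ((a + b + c - L - S) ^+ 2) = heron (a ^+ 2) (b ^+ 2) (c ^+ 2).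
Proof.
rewrite /= /heron /Num.max /Num.min.
by case: (ltP b c) => ? /=; case: (ltP a c) => ? /=; case: (ltP a b) => ? /=;
  first [ring | lra].
Qed.

Lemma sqsum_le_side_long t : sqsum t <= 3 * side_long t ^+ 2.
Proof.
have le_L P Q : dist P Q <= side_long t -> sqdist P Q <= side_long t ^+ 2.
  move=> le_PQ; rewrite -sqr_dist ler_sqr ?nnegrE ?sqrtr_ge0 //.
  exact: le_trans (sqrtr_ge0 _) le_PQ.
have : sqAB t <= side_long t ^+ 2 by apply: le_L; rewrite /side_long le_max lexx.
have : sqBC t <= side_long t ^+ 2 by apply: le_L; rewrite /side_long !le_max lexx !orbT.
have : sqCA t <= side_long t ^+ 2 by apply: le_L; rewrite /side_long !le_max lexx !orbT.
rewrite /sqsum; lra.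
Qed.

Lemma char_y_eq t : 0 < sqsum t -> char_y t = `|area2 t| / side_long t ^+ 2.
Proof.
move=> sqsum_gt0; have L2_gt0 : 0 < side_long t ^+ 2.
  by have := sqsum_le_side_long t; lra.
have L_neq0 : side_long t != 0 by apply: contraTneq L2_gt0 => ->; rewrite expr0n ltxx.
have := heron_sort (dist (vA t) (vB t)) (dist (vB t) (vC t)) (dist (vC t) (vA t)).
rewrite !sqr_dist -/(sqAB t) -/(sqBC t) -/(sqCA t) heron_sqdist /= -/(side_long t).
rewrite -/(side_short t) -/(side_mid t) => heron_sides.
rewrite /char_y /char_x.
have -> : (side_short t / side_long t) ^+ 2
          - ((side_long t ^+ 2 + side_short t ^+ 2 - side_mid t ^+ 2)
             / (2 * side_long t ^+ 2)) ^+ 2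
        = heron (side_long t ^+ 2) (side_short t ^+ 2) (side_mid t ^+ 2)
          / (4 * (side_long t ^+ 2) ^+ 2).
  by rewrite /heron; field.
rewrite heron_sides.
have -> : 4 * area2 t ^+ 2 / (4 * (side_long t ^+ 2) ^+ 2)
        = (area2 t / side_long t ^+ 2) ^+ 2 by field.
by rewrite sqrtr_sqr normf_div (ger0_norm (ltW L2_gt0)).
Qed.

Lemma char_y_le t : 0 < sqsum t -> char_y t <= 3 * `|area2 t| / sqsum t.
Proof.
move=> sqsum_gt0; rewrite char_y_eq //.
have := sqsum_le_side_long t; have := normr_ge0 (area2 t).
have L2_gt0 : 0 < side_long t ^+ 2 by have := sqsum_le_side_long t; lra.
rewrite ler_pdivrMr // mulrAC ler_pdivlMr //; nra.
Qed.

(** * The six-children inequality *)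

(* For the squared sides p, q, r of a triangle t, the k-th summand is the ratio of the
   sizes sqrt (sqsum t) and sqrt (sqsum (subdiv_child k t)), by [sqsum_child]. *)
Definition size_ratio_sum (p q r : R) : R :=
  \sum_(k < 6) Num.sqrt (36 * (p + q + r) / child_sqsum k p q r).

Lemma sqrtr_div_le (x L s : R) : 0 < x -> 0 <= s -> x <= s ^+ 2 * L ->
  Num.sqrt (x / L) <= s.
Proof.
move=> x_gt0 s_ge0 le_x; have L_gt0 : 0 < L by nra.
rewrite -[leRHS](ger0_norm s_ge0) -sqrtr_sqr ler_wsqrtr //.
by rewrite ler_pdivrMr.
Qed.

Lemma heron_lt0_box (q2 r2 q r : R) : 0 <= q <= q2 -> 0 <= r <= r2 ->
  q2 + r2 <= 1 -> 4 * q2 * r2 < (1 - q2 - r2) ^+ 2 -> heron 1 q r < 0.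
Proof.
move=> /andP[q_ge0 le_q] /andP[r_ge0 le_r] le1 lt4.
have : q * r <= q2 * r2 by apply: ler_pM.
have : (1 - q2 - r2) ^+ 2 <= (1 - q - r) ^+ 2 by rewrite ler_sqr ?nnegrE; lra.
rewrite /heron; nra.
Qed.

Definition child_bound (s k : nat) (q r : R) :=
  36 * (1 + q + r) <= (s%:R / 100) ^+ 2 * child_sqsum k 1 q r.

(* A certificate for the normalised case p = 1 covers the dyadic square
   [i/d, (i+1)/d] x [j/d, (j+1)/d] of the (q, r)-plane: [NoTriangle] squares contain no
   (q, r) satisfying the triangle inequality, [OffDiag] squares lie in r > q, [Bound]
   gives upper bounds, in hundredths, for the six summands of [size_ratio_sum 1 q r]
   (linear constraints, checked by [lra]), and [Split] halves both sides. *)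
Inductive cert :=
  | NoTriangle
  | OffDiag
  | Bound of nat & nat & nat & nat & nat & nat
  | Split of cert & cert & cert & cert.

Fixpoint cert_ok (c : cert) (i j d : nat) : Prop :=
  match c with
  | NoTriangle => i.+1%:R / d%:R + j.+1%:R / d%:R <= 1 :> R /\
      4 * (i.+1%:R / d%:R) * (j.+1%:R / d%:R) < (1 - i.+1%:R / d%:R - j.+1%:R / d%:R) ^+ 2 :> R
  | OffDiag => (i.+1 < j)%N
  | Bound a0 a1 a2 a3 a4 a5 =>
      (a0 + a1 + a2 + a3 + a4 + a5 <= 1464)%N /\
      forall q r : R, i%:R / d%:R <= q <= i.+1%:R / d%:R ->
        j%:R / d%:R <= r <= j.+1%:R / d%:R ->
        child_bound a0 0 q r /\ child_bound a1 1 q r /\ child_bound a2 2 q r /\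
        child_bound a3 3 q r /\ child_bound a4 4 q r /\ child_bound a5 5 q r
  | Split c1 c2 c3 c4 =>
      cert_ok c1 i.*2 j.*2 d.*2 /\ cert_ok c2 i.*2 j.*2.+1 d.*2 /\
      cert_ok c3 i.*2.+1 j.*2 d.*2 /\ cert_ok c4 i.*2.+1 j.*2.+1 d.*2
  end.

Lemma natr_double_div (n d : nat) : n.*2%:R / d.*2%:R = n%:R / d%:R :> R.
Proof.
by rewrite -!muln2 !natrM invfM mulrACA divff ?mulr1 // pnatr_eq0.
Qed.

Lemma cert_sound c i j d q r : (0 < d)%N -> cert_ok c i j d ->
  i%:R / d%:R <= q <= i.+1%:R / d%:R -> j%:R / d%:R <= r <= j.+1%:R / d%:R ->
  0 <= r <= q -> 0 <= heron 1 q r -> size_ratio_sum 1 q r <= 1464 / 100.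
Proof.
elim: c i j d => [||a0 a1 a2 a3 a4 a5|c1 IH1 c2 IH2 c3 IH3 c4 IH4] i j d /=.
- move=> _ [le1 lt4] /andP[_ le_q] /andP[_ le_r] /andP[r_ge0 le_rq] heron_ge0.
  have : heron 1 q r < 0.
    by apply: (heron_lt0_box _ _ le1 lt4); apply/andP; split=> //; lra.
  lra.
- move=> d_gt0 lt_ij /andP[_ le_q] /andP[le_r _] /andP[_ le_rq].
  have : i.+1%:R / d%:R < j%:R / d%:R :> R.
    by rewrite ltr_pM2r ?ltr_nat // invr_gt0 ltr0n.
  lra.
- move=> _ [sum_le bounds] q_box r_box /andP[r_ge0 le_rq] _.
  have [b0 [b1 [b2 [b3 [b4 b5]]]]] := bounds q r q_box r_box.
  have le_bound s k : child_bound s k q r ->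
      Num.sqrt (36 * (1 + q + r) / child_sqsum k 1 q r) <= s%:R / 100.
    by apply: sqrtr_div_le; [lra | exact: divr_ge0 (ler0n _ _) (ler0n _ _)].
  have le_sum : (a0 + a1 + a2 + a3 + a4 + a5)%:R <= 1464 :> R by rewrite ler_nat.
  move: (le_bound _ _ b0) (le_bound _ _ b1) (le_bound _ _ b2) (le_bound _ _ b3).
  move: (le_bound _ _ b4) (le_bound _ _ b5) le_sum.
  rewrite /size_ratio_sum !big_ord_recr big_ord0 /= !natrD; lra.
- move=> d_gt0 [ok1 [ok2 [ok3 ok4]]] /andP[le_q1 le_q2] /andP[le_r1 le_r2] rq heron_ge0.
  rewrite -(natr_double_div i) -(natr_double_div j) in le_q1 le_r1.
  rewrite -(natr_double_div i.+1) -(natr_double_div j.+1) !doubleS in le_q2 le_r2.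
  have d2_gt0 : (0 < d.*2)%N by rewrite double_gt0.
  have box (m : nat) (x : R) : m%:R / d.*2%:R <= x -> x <= m.+1%:R / d.*2%:R ->
    m%:R / d.*2%:R <= x <= m.+1%:R / d.*2%:R by move=> *; apply/andP.
  case: (leP q (i.*2.+1%:R / d.*2%:R)) => hq; case: (leP r (j.*2.+1%:R / d.*2%:R)) => hr.
  + exact: IH1 d2_gt0 ok1 (box _ _ le_q1 hq) (box _ _ le_r1 hr) rq heron_ge0.
  + exact: IH2 d2_gt0 ok2 (box _ _ le_q1 hq) (box _ _ (ltW hr) le_r2) rq heron_ge0.
  + exact: IH3 d2_gt0 ok3 (box _ _ (ltW hq) le_q2) (box _ _ le_r1 hr) rq heron_ge0.
  + exact: IH4 d2_gt0 ok4 (box _ _ (ltW hq) le_q2) (box _ _ (ltW hr) le_r2) rq heron_ge0.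
Qed.

Definition size_ratio_cert : cert :=
  Split
    (Split
      (Split
        NoTriangle
        NoTriangle
        NoTriangle
        (Split
          NoTriangle
          NoTriangle
          NoTriangle
          (Split
            NoTriangle
            NoTriangle
            NoTriangle
            (Split
              NoTriangle
              NoTriangle
              NoTriangle
              (Split
                NoTriangle
                NoTriangle
                NoTriangle
                (Bound 174 174 201 353 353 201))))))
      (Split
        OffDiag
        OffDiag
        (Split
          OffDiag
          OffDiag
          (Split
            OffDiag
            OffDiag
            (Split OffDiag OffDiag (Bound 174 175 203 355 351 200) OffDiag)
            OffDiag)
          OffDiag)
        OffDiag)
      (Split
        NoTriangle
        (Split
          NoTriangle
          (Split
            NoTriangle
            (Split
              NoTriangle
              (Bound 175 174 200 351 355 203)
              (Bound 176 173 198 348 359 205)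
              (Bound 176 174 200 343 351 204))
            (Split
              NoTriangle
              (Bound 177 172 196 344 363 207)
              (Bound 178 171 195 340 367 209)
              (Bound 178 172 196 337 358 208))
            (Bound 178 174 199 340 354 207))
          (Split
            NoTriangle
            (Split
              NoTriangle
              (Bound 179 170 193 337 372 212)
              (Split
                NoTriangle
                NoTriangle
                NoTriangle
                (Bound 179 170 191 329 369 214))
              (Bound 180 171 192 330 366 213))
            (Split
              NoTriangle
              NoTriangle
              NoTriangle
              (Bound 182 169 189 324 375 218))
            (Bound 182 171 191 327 371 217))
          (Split
            (Bound 180 173 195 333 362 212)
            (Bound 180 175 197 326 346 210)
            (Bound 182 173 194 321 353 215)
            (Bound 182 175 196 315 338 213)))
        (Split
          NoTriangle
          (Split
            NoTriangle
            NoTriangle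
            NoTriangle
            (Split
              NoTriangle
              (Bound 185 167 185 313 379 225)
              NoTriangle
              (Bound 186 168 184 308 373 227)))
          NoTriangle
          (Split
            NoTriangle
            (Bound 188 168 184 305 378 231)
            (Split
              NoTriangle
              (Bound 189 166 181 298 377 234)
              NoTriangle
              (Bound 190 167 180 294 371 236))
            (Bound 190 168 183 296 367 234)))
        (Split
          (Split
            (Split
              (Bound 183 168 187 321 380 221)
              (Bound 183 169 188 318 370 220)
              (Bound 184 168 186 315 374 222)
              (Bound 184 169 187 313 365 221))
            (Bound 184 171 190 315 361 220)
            (Bound 186 170 187 310 369 225)
            (Bound 186 172 189 305 352 223))
          (Bound 186 175 195 310 345 220)
          (Bound 190 172 188 300 359 231)
          (Bound 190 176 192 292 330 225)))
      (Split
        (Split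
          (Bound 178 178 206 347 347 206)
          (Bound 179 182 211 332 320 202)
          (Bound 182 179 202 320 332 211)
          (Bound 183 183 207 310 310 207))
        (Bound 183 190 221 319 300 204)
        (Bound 190 183 204 300 319 221)
        (Bound 190 190 213 286 286 213)))
    (Split OffDiag OffDiag (Bound 190 206 240 300 273 206) OffDiag)
    (Split
      (Split
        (Split
          (Split
            NoTriangle
            NoTriangle
            NoTriangle
            (Bound 195 165 177 288 385 248))
          (Bound 195 169 182 292 375 244)
          (Split
            NoTriangle
            (Bound 197 166 177 281 373 251)
            NoTriangle
            (Bound 199 166 176 274 364 254))
          (Bound 199 170 180 277 356 250))
        (Bound 199 177 190 285 343 243)
        (Split
          (Bound 204 167 175 271 372 266)
          (Bound 204 170 179 266 341 256)
          (Bound 209 168 174 260 354 273)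
          (Bound 208 171 178 256 328 263))
        (Bound 208 177 187 261 318 254))
      (Bound 206 190 206 273 300 240)
      (Split
        (Bound 218 172 177 251 339 287)
        (Bound 216 178 183 245 300 266)
        (Bound 227 173 175 238 317 300)
        (Bound 224 179 181 234 287 277))
      (Bound 222 190 197 240 276 260))
    (Bound 218 218 238 256 256 238).

(* [double] is [nosimpl]: it is unfolded so that [/=] computes the dyadic coordinates. *)
Ltac check_cert :=
  hnf; lazymatch goal with
  | |- _ /\ _ /\ _ /\ _ => split; [|split; [|split]]; check_cert
  | |- is_true (_ <= _)%N /\ _ =>
      split; [by [] | move=> q r; rewrite /child_bound /child_sqsum /double /=;
                      move=> /andP[? ?] /andP[? ?]; lra]
  | |- _ /\ _ => rewrite /double /=; split; lra
  | |- _ => by rewrite /double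
  end.

Lemma size_ratio_cert_ok : cert_ok size_ratio_cert 0 0 1.
Proof. check_cert. Qed.

Lemma child_sqsum_scale k (l p q r : R) :
  child_sqsum k (l * p) (l * q) (l * r) = l * child_sqsum k p q r.
Proof. by case: k => [|[|[|[|[|k]]]]] /=; ring. Qed.

Lemma size_ratio_sum_scale (l p q r : R) : l != 0 ->
  size_ratio_sum (l * p) (l * q) (l * r) = size_ratio_sum p q r.
Proof.
move=> l_neq0; apply: eq_bigr => k _; rewrite child_sqsum_scale -!mulrDr.
by rewrite mulrCA -mulf_div divff // mul1r.
Qed.

Lemma size_ratio_sum_cycle (p q r : R) : size_ratio_sum q r p = size_ratio_sum p q r.
Proof.
rewrite /size_ratio_sum !big_ord_recr !big_ord0 /=.
have -> : q + r + p = p + q + r by ring.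
lra.
Qed.

Lemma size_ratio_sum_swap (p q r : R) : size_ratio_sum p r q = size_ratio_sum p q r.
Proof.
rewrite /size_ratio_sum !big_ord_recr !big_ord0 /=.
have -> : p + r + q = p + q + r by ring.
lra.
Qed.

Lemma size_ratio_sum_le_sorted (p q r : R) : 0 <= r <= q -> q <= p -> 0 < p ->
  0 <= heron p q r -> size_ratio_sum p q r <= 1464 / 100.
Proof.
move=> /andP[r_ge0 le_rq] le_qp p_gt0 heron_ge0; have p_neq0 : p != 0 by rewrite gt_eqF.
rewrite -(size_ratio_sum_scale _ _ _ (invr_neq0 p_neq0)) mulVf //.
have r'_ge0 : 0 <= p^-1 * r by rewrite mulr_ge0 // invr_ge0 ltW.
have le_r'q' : p^-1 * r <= p^-1 * q by rewrite ler_pM2l ?invr_gt0.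
have q'_le1 : p^-1 * q <= 1 by rewrite mulrC ler_pdivrMr // mul1r.
have heron' : 0 <= heron 1 (p^-1 * q) (p^-1 * r).
  have -> : heron 1 (p^-1 * q) (p^-1 * r) = heron p q r / p ^+ 2 by rewrite /heron; field.
  by rewrite divr_ge0 ?sqr_ge0.
apply: (cert_sound (ltn0Sn 0) size_ratio_cert_ok); rewrite /= ?divr1 ?heron' //.
- by apply/andP; split; lra.
- by apply/andP; split; lra.
- by apply/andP; split; lra.
Qed.

Lemma size_ratio_sum_le (p q r : R) : 0 <= p -> 0 <= q -> 0 <= r -> 0 < p + q + r ->
  0 <= heron p q r -> size_ratio_sum p q r <= 1464 / 100.
Proof.
move=> p_ge0 q_ge0 r_ge0 pqr_gt0 heron_ge0.
have sorted x y z : size_ratio_sum x y z = size_ratio_sum p q r ->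
    heron x y z = heron p q r -> 0 <= z -> z <= y -> y <= x -> 0 < x ->
    size_ratio_sum p q r <= 1464 / 100.
  move=> <- heron_xyz z_ge0 le_zy le_yx x_gt0.
  by apply: size_ratio_sum_le_sorted => //; [apply/andP | rewrite heron_xyz].
have [le_qp|lt_pq] := leP q p; have [le_rq|lt_qr] := leP r q; have [le_rp|lt_pr] := leP r p.
- by apply: (sorted p q r) => //; lra.
- lra.
- apply: (sorted p r q); [exact: size_ratio_sum_swap | rewrite /heron; ring | lra..].
- apply: (sorted r p q); [| rewrite /heron; ring | lra..].
  by rewrite size_ratio_sum_cycle size_ratio_sum_cycle.
- apply: (sorted q p r); [| rewrite /heron; ring | lra..].
  by rewrite size_ratio_sum_swap size_ratio_sum_cycle.
- apply: (sorted q r p); [exact: size_ratio_sum_cycle | rewrite /heron; ring | lra..].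
- lra.
- apply: (sorted r q p); [| rewrite /heron; ring | lra..].
  by rewrite size_ratio_sum_swap size_ratio_sum_cycle size_ratio_sum_cycle.
Qed.

(** * Inverse size along the chain *)

Definition inv_size (t : triangle R) : R := (Num.sqrt (sqsum t))^-1.

Lemma sum_inv_size_children t : 0 < sqsum t ->
  \sum_(k < 6) inv_size (subdiv_child k t) <= 1464 / 100 * inv_size t.
Proof.
move=> sqsum_gt0; have sqrt_gt0 : 0 < Num.sqrt (sqsum t) by rewrite sqrtr_gt0.
have heron_ge0 : 0 <= heron (sqAB t) (sqBC t) (sqCA t).
  by rewrite heron_sqdist mulr_ge0 ?sqr_ge0.
have := size_ratio_sum_le (sqdist_ge0 _ _) (sqdist_ge0 _ _) (sqdist_ge0 _ _)
  sqsum_gt0 heron_ge0.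
have -> : size_ratio_sum (sqAB t) (sqBC t) (sqCA t)
          = Num.sqrt (sqsum t) * \sum_(k < 6) inv_size (subdiv_child k t).
  rewrite mulr_sumr; apply: eq_bigr => k _; rewrite -sqsum_child -/(sqsum t).
  rewrite -mulf_div divff ?mul1r; last by rewrite pnatr_eq0.
  rewrite sqrtrM; last exact: ltW.
  by rewrite sqrtrV //; apply/ltW/sqsum_child_gt0.
move=> le_sum; rewrite -(ler_pM2l sqrt_gt0) [X in _ <= X]mulrCA /inv_size mulfV ?mulr1 //.
by rewrite gt_eqF.
Qed.

Definition subdiv_word (t : triangle R) (s : seq 'I_6) : triangle R :=
  foldl (fun t k => subdiv_child k t) t s.

Fixpoint words (n : nat) : seq (seq 'I_6) :=
  if n is m.+1 then [seq k :: s | k <- enum 'I_6, s <- words m] else [:: [::]].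

Lemma mem_words s : s \in words (size s).
Proof. by elim: s => [|k s IH] //=; apply: allpairs_f; rewrite ?mem_enum. Qed.

Lemma sqsum_word_gt0 t s : 0 < sqsum t -> 0 < sqsum (subdiv_word t s).
Proof. by elim: s t => [|k s IH] t //= /(sqsum_child_gt0 k); apply: IH. Qed.

Lemma sum_inv_size_words n t : 0 < sqsum t ->
  \sum_(s <- words n) inv_size (subdiv_word t s) <= (1464 / 100) ^+ n * inv_size t.
Proof.
elim: n t => [|n IH] t sqsum_gt0 /=; first by rewrite big_seq1 expr0 mul1r.
rewrite big_allpairs_dep /=.
apply: (@le_trans _ _ (\sum_(k <- enum 'I_6) (1464 / 100) ^+ n * inv_size (subdiv_child k t))).
  by apply: ler_sum => k _; apply/IH/sqsum_child_gt0.
rewrite -mulr_sumr exprSr -mulrA ler_pM2l; last by apply: exprn_gt0; lra.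
have -> : \sum_(k <- enum 'I_6) inv_size (subdiv_child k t)
          = \sum_(k < 6) inv_size (subdiv_child k t) by rewrite big_enum; apply: eq_bigl.
exact: sum_inv_size_children.
Qed.

Definition choices (T : Type) (c : nat -> T -> 'I_6) (w : T) (n : nat) : seq 'I_6 :=
  [seq c i w | i <- iota 0 n].

Lemma tri_chain_word (T : Type) T0 (c : nat -> T -> 'I_6) w n :
  tri_chain T0 c w n = subdiv_word T0 (choices c w n).
Proof.
elim: n => [|n IH] //.
rewrite [tri_chain _ _ _ _]/= IH /choices -[n.+1]addn1 iotaD map_cat cats1.
by rewrite /subdiv_word foldl_rcons.
Qed.

Lemma area2_chain (T : Type) T0 (c : nat -> T -> 'I_6) w n :
  area2 (tri_chain T0 c w n) = area2 T0 / 6 ^+ n.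
Proof.
elim: n => [|n IH] /=; first by rewrite expr0 divr1.
by rewrite area2_child IH exprSr invfM mulrA.
Qed.

Lemma char_y_chain_le (T : Type) T0 (c : nat -> T -> 'I_6) w n (a : R) :
  0 < sqsum T0 -> inv_size (tri_chain T0 c w n) <= a ^+ n ->
  char_y (tri_chain T0 c w n) <= 3 * `|area2 T0| * (a ^+ 2 / 6) ^+ n.
Proof.
set t := tri_chain T0 c w n => sqsum0_gt0 small.
have sqsum_gt0 : 0 < sqsum t by rewrite /t tri_chain_word sqsum_word_gt0.
apply: le_trans (char_y_le sqsum_gt0) _.
have six_gt0 : 0 < (6 : R) ^+ n by apply: exprn_gt0; lra.
have inv_sqsum : (sqsum t)^-1 <= (a ^+ n) ^+ 2.
  have inv_ge0 : 0 <= inv_size t by rewrite invr_ge0 sqrtr_ge0.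
  have -> : (sqsum t)^-1 = inv_size t ^+ 2.
    by rewrite /inv_size exprVn sqr_sqrtr //; exact: ltW.
  by rewrite ler_sqr ?nnegrE //; apply: le_trans small.
rewrite /t area2_chain normf_div (ger0_norm (ltW six_gt0)) expr_div_n -exprM mulnC exprM.
have -> : 3 * (`|area2 T0| / 6 ^+ n) / sqsum t
          = 3 * `|area2 T0| * ((sqsum t)^-1 / 6 ^+ n) by ring.
apply: ler_wpM2l; first by apply: mulr_ge0; [lra | exact: normr_ge0].
by rewrite ler_pM2r ?invr_gt0.
Qed.

(** * The random chain *)

Lemma bigsetU_sup (T : Type) (I : eqType) (r : seq I) (p : pred I) (F : I -> set T) i x :
  i \in r -> p i -> F i x -> (\big[setU/set0]_(j <- r | p j) F j) x.
Proof.
elim: r => [|j r IH] //; rewrite in_cons big_cons => /orP[/eqP <- pi Fix|ir pi Fix].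
  by rewrite pi; left.
by case: ifP => _; [right|]; apply: IH.
Qed.

Lemma measure_bigsetU_le (d : measure_display) (T : measurableType d)
    (mu : {measure set T -> \bar R}) (I : Type) (r : seq I) (p : pred I) (F : I -> set T) :
  (forall i, measurable (F i)) ->
  (mu (\big[setU/set0]_(i <- r | p i) F i) <= \sum_(i <- r | p i) mu (F i))%E.
Proof.
move=> F_meas; elim: r => [|i r IH]; first by rewrite !big_nil measure0.
rewrite !big_cons; case: ifP => _ //.
apply: le_trans (measureU2 _ (F_meas i) (bigsetU_measurable _ _)) _ => [j _ //|].
exact: leeD2l.
Qed.

Lemma nneseries_geometric_lty (K x : R) : 0 <= x < 1 ->
  (\sum_(n <oo) (K * x ^+ n)%:E < +oo)%E.
Proof.
move=> /andP[x_ge0 x_lt1].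
have : eseries (fun n => (K * x ^+ n)%:E) @ \oo --> (K * (1 - x)^-1)%:E.
  apply: cvg_EFin; first by apply: nearW => n; rewrite /eseries /= sumEFin.
  rewrite [X in X @ _ --> _](_ : _ = series (geometric K x)); last first.
    by apply/funext => n; rewrite /= /eseries /= sumEFin.
  by apply: cvg_geometric_series; rewrite ger0_norm.
by move/cvg_lim => ->; rewrite ?ltry.
Qed.

Section IidChoices.
Variables (d : measure_display) (T : measurableType d) (P : probability T R).
Variable c : nat -> T -> 'I_6.
Hypothesis c_iid : iid_uniform6 P c.

Definition cylinder (n : nat) (s : seq 'I_6) : set T :=
  [set w | forall i, i \in iota 0 n -> c i w = nth ord0 s i].

Lemma measurable_cylinder n s : measurable (cylinder n s).
Proof.
rewrite /cylinder; elim: (iota 0 n) => [|i l IH].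
  by rewrite [X in measurable X](_ : _ = setT) //; apply/seteqP; split.
rewrite [X in measurable X](_ : _ = [set w | c i w = nth ord0 s i] `&`
                                    [set w | forall j, j \in l -> c j w = nth ord0 s j]).
  exact: measurableI (c_iid.1 _ _) IH.
apply/seteqP; split=> w /=.
  by move=> h; split=> [|j jl]; apply: h; rewrite in_cons ?eqxx ?jl ?orbT.
by move=> [h1 h2] j; rewrite in_cons => /orP[/eqP -> //|/h2].
Qed.

Lemma prob_cylinder n s : P (cylinder n s) = ((6%:R)^-1 ^+ n)%:E.
Proof. by have := c_iid.2 (iota 0 n) (nth ord0 s) (iota_uniq 0 n); rewrite size_iota. Qed.

Lemma cylinder_choices w n : cylinder n (choices c w n) w.
Proof.
move=> i; rewrite mem_iota add0n => /andP[_ lt_in].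
by rewrite /choices (nth_map 0) ?size_iota // nth_iota.
Qed.

Definition large_event T0 (a : R) (n : nat) : set T :=
  \big[setU/set0]_(s <- words n | a ^+ n < inv_size (subdiv_word T0 s)) cylinder n s.

Lemma measurable_large_event T0 a n : measurable (large_event T0 a n).
Proof. by apply: bigsetU_measurable => s _; exact: measurable_cylinder. Qed.

Lemma large_event_chain T0 a w n :
  a ^+ n < inv_size (tri_chain T0 c w n) -> large_event T0 a n w.
Proof.
move=> lt_an; apply: (bigsetU_sup (i := choices c w n)); last exact: cylinder_choices.
  by have := mem_words (choices c w n); rewrite size_map size_iota.
by rewrite -tri_chain_word.
Qed.

Lemma prob_large_event_le T0 a n : 0 < sqsum T0 -> 0 < a ->
  (P (large_event T0 a n) <= (inv_size T0 * (1464 / 100 / (6 * a)) ^+ n)%:E)%E.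
Proof.
move=> sqsum_gt0 a_gt0.
apply: le_trans (measure_bigsetU_le P _ _ (measurable_cylinder n)) _.
rewrite (eq_bigr (fun=> ((6%:R^-1) ^+ n)%:E)); last by move=> s _; exact: prob_cylinder.
rewrite sumEFin lee_fin; set x := (6%:R^-1) ^+ n.
have x_gt0 : 0 < x by apply: exprn_gt0; rewrite invr_gt0; lra.
have x_ge0 := ltW x_gt0.
have an_gt0 : 0 < a ^+ n by apply: exprn_gt0.
apply: (@le_trans _ _ (\sum_(s <- words n) x * (inv_size (subdiv_word T0 s) / a ^+ n))).
  rewrite big_mkcond /=; apply: ler_sum => s _; case: ifP => lt_an.
    by rewrite ler_peMr // ler_pdivlMr // mul1r; apply: ltW.
  by rewrite mulr_ge0 ?divr_ge0 ?invr_ge0 ?sqrtr_ge0 // ltW.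
rewrite -mulr_sumr -mulr_suml.
apply: (@le_trans _ _ (x * ((1464 / 100) ^+ n * inv_size T0 / a ^+ n))).
  by rewrite ler_pM2l // ler_pM2r ?invr_gt0 //; apply: sum_inv_size_words.
have -> : (1464 / 100 / (6 * a)) ^+ n = x * (1464 / 100) ^+ n * (a ^+ n)^-1.
  by rewrite /x -exprVn -!exprMn invfM mulrCA mulrA.
by rewrite le_eqVlt; apply/orP; left; apply/eqP; ring.
Qed.

Lemma ae_inv_size_chain_le T0 (a : R) : 0 < sqsum T0 -> 1464 / 100 < 6 * a ->
  {ae P, forall w, exists N, forall n, (N <= n)%N -> inv_size (tri_chain T0 c w n) <= a ^+ n}.
Proof.
move=> sqsum_gt0 rate_lt; have a_gt0 : 0 < a by lra.
have null_limsup : P (lim_sup_set (large_event T0 a)) = 0.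
  apply: lim_sup_set_cvg0; first exact: measurable_large_event.
  apply: le_lt_trans (nneseries_geometric_lty (inv_size T0) _).
    by apply: lee_nneseries => // n _; exact: prob_large_event_le.
  by apply/andP; split; [apply: divr_ge0; lra | rewrite ltr_pdivrMr; lra].
exists (lim_sup_set (large_event T0 a)); split => //.
  apply: bigcap_measurable => [|k _]; first by exists 0%N.
  by apply: bigcup_measurable => j _; exact: measurable_large_event.
move=> w /= not_eventually N _; apply: contrapT => not_large; apply: not_eventually.
exists N => n le_Nn; rewrite leNgt; apply/negP => /large_event_chain large.
by apply: not_large; exists n.
Qed.

End IidChoices.

Lemma limn_esup_le_eventually (u : nat -> \bar R) (l : \bar R) N :
  (forall n, (N <= n)%N -> (u n <= l)%E) -> (limn_esup u <= l)%E.
Proof.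
move=> u_le; rewrite /limn_esup /limf_esup; apply: le_trans (ereal_inf_lbound _) _.
  by exists [set n | (N <= n)%N]; [exists N | reflexivity].
by apply: ge_ereal_sup => _ [n Nn <-]; apply: u_le.
Qed.

Lemma limn_esup_lnE_le (y : nat -> R) (K b : R) N : 0 < K -> 0 < b ->
  (forall n, (N <= n)%N -> 0 <= y n <= K * b ^+ n) ->
  (limn_esup (fun n => ((n%:R)^-1)%:E * lnE (y n)) <= (ln b)%:E)%E.
Proof.
move=> K_gt0 b_gt0 y_bound; apply/lee_addgt0Pr => e e_gt0.
pose M := maxn (maxn N 1) (Num.bound (`|ln K| / e)).
have M_bound : `|ln K| / e < M%:R.
  have bound_ge0 : 0 <= `|ln K| / e by apply: divr_ge0; [exact: normr_ge0 | exact: ltW].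
  by apply: lt_le_trans (archi_boundP bound_ge0) _; rewrite ler_nat leq_maxr.
apply: (limn_esup_le_eventually (N := M)) => j le_Mj.
have le_Nj : (N <= j)%N by apply: leq_trans le_Mj; rewrite !leq_max leqnn.
have j_gt0 : (0 < j)%N by apply: leq_trans le_Mj; rewrite !leq_max leqnn orbT.
have jR_gt0 : 0 < j%:R :> R by rewrite ltr0n.
have le_lnK : `|ln K| < e * j%:R.
  move: M_bound; rewrite ltr_pdivrMr // mulrC => /lt_le_trans; apply.
  by rewrite ler_pM2l // ler_nat.
have [y_ge0 y_le] := andP (y_bound j le_Nj).
rewrite /lnE; case: eqP => [_|/eqP y_neq0].
  by rewrite gt0_muleNy ?leNye // lte_fin invr_gt0.
have y_gt0 : 0 < y j by rewrite lt_neqAle eq_sym y_neq0.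
have ln_y : ln (y j) <= ln K + j%:R * ln b.
  rewrite mulr_natl -lnXn // -lnM ?posrE ?exprn_gt0 //.
  by rewrite ler_ln ?posrE // mulr_gt0 ?exprn_gt0.
rewrite -EFinD -EFinM lee_fin mulrC ler_pdivrMr //.
have := ler_norm (ln K); nra.
Qed.

End TriangleChain.

Theorem theorem1 (R : realType) :
  exists chi : R, 0 < chi /\
  forall (T0 : triangle R), not_all_equal T0 ->
  forall (d : measure_display) (T : measurableType d) (P : probability T R)
         (c : nat -> T -> 'I_6),
  iid_uniform6 P c ->
  {ae P, forall w,
     (limn_esup (fun n : nat =>
        ((n%:R)^-1)%:E * lnE (char_y (tri_chain T0 c w n)))
      <= (- chi)%:E)%E}.
Proof.
pose a : R := 489 / 200.
have ratio_gt0 : 0 < a ^+ 2 / 6 by rewrite /a; lra.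
have ratio_lt1 : a ^+ 2 / 6 < 1 by rewrite /a; lra.
exists (- ln (a ^+ 2 / 6)); split; first by rewrite oppr_gt0 ln_lt0 // ratio_gt0.
move=> T0 T0_nondeg d T P c c_iid; have sqsum_gt0 := sqsum_gt0 T0_nondeg.
have rate_lt : 1464 / 100 < 6 * a by rewrite /a; lra.
apply: filterS (ae_inv_size_chain_le c_iid sqsum_gt0 rate_lt) => w [N small].
rewrite opprK; apply: (limn_esup_lnE_le (N := N) (K := 3 * `|area2 T0| + 1)) => [||n le_Nn].
- by have := normr_ge0 (area2 T0); lra.
- exact: ratio_gt0.
apply/andP; split; first exact: sqrtr_ge0.
apply: le_trans (char_y_chain_le sqsum_gt0 (small n le_Nn)) _.
by rewrite ler_pM2r ?exprn_gt0 // lerDl.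
Qed.
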